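(* With the notation of the context, every $\alpha$-communal $k$-tuple $\mathbf{g}$ can be written in exactly one way as \[ \mathbf{g}=\mathbf{b}(\mathbf{a})+\sum_{i=1}^k c_i\mathbf{x}_i \] with $\mathbf{a}\in\mathcal{A}$ and $c_1,\dots,c_k\in\mathbb{Z}_{\ge 0}$; moreover, for every $\mathbf{a}\in\mathcal{A}$ and all $c_i\in\mathbb{Z}_{\ge0}$ the right-hand side is an $\alpha$-communal $k$-tuple. Explicitly, if $\mathbf{g}=[g_1,\dots,g_k]$ with $g=\sum g_i$, then $a_j$ is the least nonnegative residue of $m_jg-n_jg_j$ modulo $A$ and $c_j=(m_jg-n_jg_j-a_j)/A$. Furthermore, the sum of the entries of $\mathbf{b}(\mathbf{a})$ equals $b(\mathbf{a})=\frac{N}{A}\sum_{i=1}^k\frac{a_i}{n_i}$.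
   Context: Let $k\ge 2$ and let $\alpha_1,\dots,\alpha_k$ be nonnegative rational numbers such that the sum of any $k-1$ of them is at most $1$ and $\sum_i\alpha_i>1$. A $k$-tuple $[g_1,\dots,g_k]$ of integers is called $\alpha$-communal if $0\le g_i\le \alpha_i\sum_{j=1}^k g_j$ for every $i$. Write $\alpha_i=m_i/n_i$ in lowest terms with $n_i\ge 1$. Set $N=\prod_{i=1}^k n_i$, $A=N(\sum_{i=1}^k\alpha_i-1)$ (a positive integer), and $\hat\alpha_i=1-\sum_{j\ne i}\alpha_j$. For each $i$ define $\mathbf{x}_i=\frac{N}{n_i}[\alpha_1,\dots,\alpha_{i-1},\hat\alpha_i,\alpha_{i+1},\dots,\alpha_k]$, i.e. the $k$-tuple whose $j$-th entry is $\frac{N}{n_i}\alpha_j$ for $j\ne i$ and whose $i$-th entry is $\frac{N}{n_i}\hat\alpha_i$. Let $\mathcal{A}$ be the set of integer $k$-tuples $\mathbf{a}=(a_1,\dots,a_k)$ with $0\le a_i<A$ for all $i$ such that for every $1\le j\le k$ the integer $N\hat\alpha_j\frac{a_j}{n_j}+N\alpha_j\sum_{i\ne j}\frac{a_i}{n_i}$ is divisible by $A$. For $\mathbf{a}\in\mathcal{A}$ let $\mathbf{b}(\mathbf{a})=[b_1,\dots,b_k]=\sum_{i=1}^k\frac{a_i}{A}\mathbf{x}_i$, i.e. $b_j=\frac1A\left(N\hat\alpha_j\frac{a_j}{n_j}+N\alpha_j\sum_{i\ne j}\frac{a_i}{n_i}\right)$. *)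

From HB Require Import structures.
From mathcomp Require Import all_boot all_order all_algebra.
Set Implicit Arguments. Unset Strict Implicit. Unset Printing Implicit Defensive.
Import Order.TTheory GRing.Theory Num.Theory.
Local Open Scope ring_scope.

Section Communal.
Variable k : nat.
Variable al : 'I_k -> rat.

Definition mm (i : 'I_k) : int := numq (al i).
Definition nn (i : 'I_k) : int := denq (al i).

Definition NN : int := \prod_(i < k) nn i.

Definition alhat (i : 'I_k) : rat := 1 - \sum_(j < k | j != i) al j.

(* A = N (sum alpha_i - 1), an integer (the rational number is integral;
   numq recovers it as an int) *)
Definition AA : int := numq ((NN%:~R : rat) * (\sum_(i < k) al i - 1)).

Definition xvec (i j : 'I_k) : rat :=
  ((NN%:~R : rat) / (nn i)%:~R) * (if j == i then alhat i else al j).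

Definition Bnum (a : 'I_k -> int) (j : 'I_k) : rat :=
  (NN%:~R : rat) * alhat j * ((a j)%:~R / (nn j)%:~R)
  + (NN%:~R : rat) * al j * \sum_(i < k | i != j) ((a i)%:~R / (nn i)%:~R).

Definition inA (a : {ffun 'I_k -> int}) : Prop :=
  (forall i, 0 <= a i /\ a i < AA) /\
  (forall j, exists q : int, Bnum a j = (AA%:~R : rat) * q%:~R).

Definition bvec (a : 'I_k -> int) (j : 'I_k) : rat :=
  \sum_(i < k) ((a i)%:~R / (AA%:~R : rat)) * xvec i j.

Definition rhs (a c : 'I_k -> int) (j : 'I_k) : rat :=
  bvec a j + \sum_(i < k) (c i)%:~R * xvec i j.

Definition communal (g : 'I_k -> int) : Prop :=
  forall i, 0 <= g i /\ (g i)%:~R <= al i * (\sum_(j < k) g j)%:~R.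

End Communal.

Set Warnings "-notation-overridden,-ambiguous-paths".
From HB Require Import structures.
From mathcomp Require Import all_boot all_order all_algebra.
From mathcomp Require Import ring.
Set Implicit Arguments. Unset Strict Implicit. Unset Printing Implicit Defensive.
Import Order.TTheory GRing.Theory Num.Theory.
Local Open Scope ring_scope.

(* Write alpha_i = m_i/n_i and consider the linear forms
     T_j(v) = m_j (sum_l v_l) - n_j v_j          (j = 1..k)
   on rational k-tuples.  The vectors x_i are "dual" to these forms:
   T_j(sum_i la_i x_i) = la_j A for all rational la, and conversely every v is
   recovered as v = sum_i (T_i(v)/A) x_i.  Hence a tuple g equals
   b(a) + sum_i c_i x_i exactly when T_j(g) = a_j + c_j A for every j; the
   conditions 0 <= a_j < A then force a_j = T_j(g) mod A and c_j = T_j(g) div A,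
   which gives uniqueness and the explicit formulas.  Existence takes these
   values: T_j(g) >= 0 is precisely the communality condition at j, and the
   divisibility condition defining \mathcal{A} is the integrality of
   b(a) = g - sum c_i x_i, because the x_i are integral.  Conversely the
   x_i are integral and nonnegative, so b(a) + sum c_i x_i is a nonnegative
   integer tuple with T_j >= 0, i.e. communal.  Finally the entries of x_i sum
   to N/n_i, which yields the formula for the entry sum of b(a). *)

Lemma divz_modz_unique (d q r : int) : 0 <= r < d ->
  ((q * d + r) %% d)%Z = r /\ ((q * d + r) %/ d)%Z = q.
Proof.
move=> /andP[r0 rd]; have d0 : d != 0 by rewrite gt_eqF // (le_lt_trans r0 rd).
split; first by rewrite modzMDl modz_small ?r0.
rewrite divzMDl // divz_small ?addr0 // r0 /= gtz0_abs //.
exact: le_lt_trans r0 rd.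
Qed.

Lemma int_numq (x : rat) : x \is a Num.int -> x = (numq x)%:~R.
Proof. by case/intrP=> m ->; rewrite numq_int. Qed.

Section Communal.
Variable k : nat.
Variable al : 'I_k -> rat.

Let nq i : rat := (nn al i)%:~R.
Let Nq : rat := (NN al)%:~R.
Let Aq : rat := (AA al)%:~R.

Lemma nq_gt0 i : 0 < nq i.
Proof. by rewrite /nq ltr0z denq_gt0. Qed.

Lemma nq_neq0 i : nq i != 0.
Proof. by rewrite gt_eqF ?nq_gt0. Qed.

Lemma mm_eq i : (mm al i)%:~R = nq i * al i.
Proof. by rewrite /nq /mm /nn numqE mulrC. Qed.

Lemma Nq_gt0 : 0 < Nq.
Proof.
by rewrite /Nq /NN rmorph_prod; apply: prodr_gt0 => i _; apply: nq_gt0.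
Qed.

Lemma Nq_div i : Nq / nq i = (\prod_(l < k | l != i) nn al l)%:~R.
Proof.
rewrite /Nq /NN (bigD1 i) //= rmorphM /= -/(nq i) mulrC mulKf //.
exact: nq_neq0.
Qed.

(* A = N (sum alpha - 1) holds over the rationals: the right side is an integer. *)
Lemma Aq_eq : Aq = Nq * (\sum_(i < k) al i - 1).
Proof.
have Nal i : Nq * al i = (mm al i * \prod_(l < k | l != i) nn al l)%:~R.
  by rewrite rmorphM /= -Nq_div mm_eq; field; rewrite nq_neq0.
have Nint : Nq * (\sum_(i < k) al i - 1) =
    (\sum_(i < k) (mm al i * \prod_(l < k | l != i) nn al l) - NN al)%:~R.
  rewrite rmorphB /= rmorph_sum mulrBr mulr1 mulr_sumr.
  by congr (_ - _); apply: eq_bigr => i _; rewrite Nal.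
by rewrite /Aq /AA Nint numq_int.
Qed.

Lemma offdiag_int i j : j != i -> Nq / nq i * al j \is a Num.int.
Proof.
move=> ji; rewrite Nq_div (bigD1 j) //= rmorphM /= mulrAC -mm_eq.
by rewrite -rmorphM intr_int.
Qed.

Lemma xvec_int i j : xvec al i j \is a Num.int.
Proof.
rewrite /xvec -/Nq -/(nq i); case: eqP => [_|/eqP ji]; last exact: offdiag_int.
rewrite /alhat mulrBr mulr1 mulr_sumr rpredB //; first by rewrite Nq_div intr_int.
by apply: rpred_sum => l li; apply: offdiag_int.
Qed.

(* x_i = (N/n_i) alpha - (A/n_i) e_i : the diagonal correction is uniform. *)
Lemma xvec_eq i j : xvec al i j = Nq / nq i * al j - (i == j)%:R * Aq / nq j.
Proof.
rewrite /xvec -/Nq -/(nq i) eq_sym.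
case: eqP => [->|_]; last by rewrite !mul0r subr0.
have -> : alhat al j = 1 - (\sum_(l < k) al l - al j).
  by rewrite /alhat [X in X - al j](bigD1 j) //= addrC addrK.
by rewrite Aq_eq /= mul1r; ring.
Qed.

Lemma xvec_sum i : \sum_(j < k) xvec al i j = Nq / nq i.
Proof.
under eq_bigr => j _ do rewrite xvec_eq.
rewrite sumrB.
have -> : \sum_(j < k) (i == j)%:R * Aq / nq j = Aq / nq i.
  rewrite (bigD1 i) //= eqxx big1 ?addr0 ?mul1r //.
  by move=> j ji; rewrite eq_sym (negbTE ji) !mul0r.
rewrite -mulr_sumr.
by rewrite Aq_eq; field; rewrite nq_neq0.
Qed.

Definition comb (la : 'I_k -> rat) (j : 'I_k) : rat :=
  \sum_(i < k) la i * xvec al i j.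

Definition tform (v : 'I_k -> rat) (j : 'I_k) : rat :=
  (mm al j)%:~R * (\sum_(l < k) v l) - nq j * v j.

Lemma comb_eq la j :
  comb la j = Nq * al j * (\sum_(i < k) la i / nq i) - la j * Aq / nq j.
Proof.
rewrite /comb; under eq_bigr => i _ do rewrite xvec_eq mulrBr.
rewrite sumrB; congr (_ - _).
  by rewrite mulr_sumr; apply: eq_bigr => i _; ring.
rewrite (bigD1 j) //= eqxx big1 ?addr0 /=; first by rewrite mul1r mulrA.
by move=> i /negbTE ->; rewrite !mul0r mulr0.
Qed.

Lemma tform_comb la j : tform (comb la) j = la j * Aq.
Proof.
rewrite /tform; under eq_bigr => l _ do rewrite comb_eq.
set L := \sum_(i < k) la i / nq i.
have -> : \sum_(l < k) (Nq * al l * L - la l * Aq / nq l) = Nq * L.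
  rewrite sumrB -mulr_suml -mulr_sumr.
  have -> : \sum_(i < k) la i * Aq / nq i = Aq * L.
    by rewrite /L mulr_sumr; apply: eq_bigr => i _; rewrite mulrCA mulrA.
  by rewrite Aq_eq; ring.
by rewrite comb_eq -/L mm_eq; field; rewrite nq_neq0.
Qed.

Lemma tform_ext v w j : v =1 w -> tform v j = tform w j.
Proof. by move=> e; rewrite /tform e (eq_bigr _ (fun l _ => e l)). Qed.

Lemma tform_int (g : 'I_k -> int) j :
  tform (fun l => (g l)%:~R) j
  = (mm al j * (\sum_(l < k) g l) - nn al j * g j)%:~R.
Proof. by rewrite /tform rmorphB !rmorphM /= rmorph_sum. Qed.

Lemma communal_tform (g : 'I_k -> int) j :
  ((g j)%:~R <= al j * (\sum_(l < k) g l)%:~R) =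
  (0 <= mm al j * (\sum_(l < k) g l) - nn al j * g j).
Proof.
rewrite -(ler0z rat) rmorphB !rmorphM /= mm_eq subr_ge0 -mulrA.
by rewrite ler_pM2l ?nq_gt0.
Qed.

Lemma rhs_comb (a c : 'I_k -> int) j :
  rhs al a c j = comb (fun i => (a i)%:~R / Aq + (c i)%:~R) j.
Proof. by rewrite /rhs /bvec /comb -big_split; apply: eq_bigr => i _; rewrite mulrDl. Qed.

Lemma Bnum_comb (a : 'I_k -> int) j : Bnum al a j = comb (fun i => (a i)%:~R) j.
Proof.
rewrite /Bnum /comb [in RHS](bigD1 j) //= /xvec eqxx mulr_sumr; congr (_ + _).
  by rewrite -/Nq -/(nq j); ring.
by apply: eq_bigr => i /negbTE; rewrite eq_sym => ->; rewrite -/Nq -/(nq i); ring.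
Qed.

Lemma bvec_Bnum (a : 'I_k -> int) j : bvec al a j = Bnum al a j / Aq.
Proof.
by rewrite Bnum_comb /bvec /comb mulr_suml; apply: eq_bigr => i _; rewrite -/Aq; ring.
Qed.

Lemma bvec_sum (a : 'I_k -> int) :
  \sum_(j < k) bvec al a j = Nq / Aq * \sum_(i < k) ((a i)%:~R / nq i).
Proof.
rewrite /bvec exchange_big /= mulr_sumr; apply: eq_bigr => i _.
by rewrite -mulr_sumr xvec_sum; ring.
Qed.

Hypothesis hsum : 1 < \sum_(i < k) al i.

Lemma Aq_gt0 : 0 < Aq.
Proof. by rewrite Aq_eq mulr_gt0 ?Nq_gt0 // subr_gt0. Qed.

Lemma AA_gt0 : 0 < AA al.
Proof. by rewrite -(ltr0z rat) Aq_gt0. Qed.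

Lemma Aq_neq0 : Aq != 0.
Proof. by rewrite gt_eqF ?Aq_gt0. Qed.

Lemma comb_tform v j : comb (fun i => tform v i / Aq) j = v j.
Proof.
rewrite comb_eq.
have -> : \sum_(i < k) tform v i / Aq / nq i =
    (\sum_(l < k) v l) * (\sum_(i < k) al i - 1) / Aq.
  have e i : tform v i / Aq / nq i = (al i * (\sum_(l < k) v l) - v i) / Aq.
    by rewrite /tform mm_eq; field; rewrite nq_neq0 Aq_neq0.
  by rewrite (eq_bigr _ (fun i _ => e i)) -mulr_suml sumrB -mulr_suml; ring.
have s1 : \sum_(i < k) al i - 1 != 0 by rewrite subr_eq0 gt_eqF.
rewrite /tform mm_eq Aq_eq.
by field; rewrite nq_neq0 s1 gt_eqF ?Nq_gt0.
Qed.

Lemma tform_rhs (g a c : 'I_k -> int) :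
  (forall j, (g j)%:~R = rhs al a c j) ->
  forall j, mm al j * (\sum_(l < k) g l) - nn al j * g j = a j + c j * AA al.
Proof.
move=> hg j; apply/eqP; rewrite -(eqr_int rat) -tform_int.
rewrite (@tform_ext _ (comb (fun i => (a i)%:~R / Aq + (c i)%:~R)) j); last first.
  by move=> l; rewrite hg rhs_comb.
by rewrite tform_comb rmorphD rmorphM /= -/Aq mulrDl divfK ?Aq_neq0.
Qed.

Lemma decomposition_formula (g c : 'I_k -> int) (a : {ffun 'I_k -> int}) :
  inA al a ->
  (forall j, (g j)%:~R = rhs al a c j) -> forall j,
  a j = ((mm al j * (\sum_(i < k) g i) - nn al j * g j) %% AA al)%Z /\
  c j = ((mm al j * (\sum_(i < k) g i) - nn al j * g j) %/ AA al)%Z.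
Proof.
move=> [ha _] hg j; rewrite (tform_rhs hg) addrC.
have [a0 aA] := ha j.
by have [-> ->] := divz_modz_unique (c j) (introT andP (conj a0 aA)).
Qed.

Lemma decomposition_coeffs (g c : 'I_k -> int) (a : {ffun 'I_k -> int}) :
  inA al a -> (forall j, (g j)%:~R = rhs al a c j) -> forall j,
  a j = ((mm al j * (\sum_(i < k) g i) - nn al j * g j) %% AA al)%Z /\
  (c j)%:~R = ((mm al j * (\sum_(i < k) g i) - nn al j * g j - a j)%:~R / Aq).
Proof.
move=> ha hg j; split; first exact: (decomposition_formula ha hg j).1.
by rewrite (tform_rhs hg j) addrC addKr rmorphM /= mulfK ?Aq_neq0.
Qed.

(* Existence: taking a, c from the Euclidean division of T(g) by A works. *)
Lemma decomposition_exists (g : {ffun 'I_k -> int}) : communal al g ->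
  exists ac : {ffun 'I_k -> int} * {ffun 'I_k -> int},
    [/\ inA al ac.1, (forall i, 0 <= ac.2 i) &
        forall j, (g j)%:~R = rhs al ac.1 ac.2 j].
Proof.
move=> hg; pose t j := mm al j * (\sum_(i < k) g i) - nn al j * g j.
have t_ge0 j : 0 <= t j by rewrite /t -communal_tform; case: (hg j).
pose a := [ffun j => (t j %% AA al)%Z]; pose c := [ffun j => (t j %/ AA al)%Z].
have g_rhs j : (g j)%:~R = rhs al a c j.
  rewrite rhs_comb -[LHS](comb_tform (fun l => (g l)%:~R) j).
  apply: eq_bigr => i _; congr (_ * _).
  rewrite tform_int -/(t i) {1}(divz_eq (t i) (AA al)) !ffunE.
  by rewrite rmorphD rmorphM /= mulrDl mulfK ?Aq_neq0 // addrC.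
have bvec_int j : bvec al a j \is a Num.int.
  have -> : bvec al a j = (g j)%:~R - \sum_(i < k) (c i)%:~R * xvec al i j.
    by rewrite g_rhs /rhs addrK.
  rewrite rpredB ?intr_int //; apply: rpred_sum => i _.
  by rewrite rpredM ?intr_int ?xvec_int.
exists (a, c); split => //=.
- split=> [i|j]; first by rewrite !ffunE modz_ge0 ?gt_eqF ?ltz_pmod ?AA_gt0.
  have [q hq] := intrP (bvec_int j).
  by exists q; move: hq; rewrite bvec_Bnum => /(canRL (divfK Aq_neq0)); rewrite mulrC.
- by move=> i; rewrite ffunE divz_ge0 ?AA_gt0.
Qed.

Lemma decomposition_unique (g : {ffun 'I_k -> int}) :
  communal al g ->
  exists! ac : {ffun 'I_k -> int} * {ffun 'I_k -> int},
    [/\ inA al ac.1, (forall i, 0 <= ac.2 i) &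
        forall j, (g j)%:~R = rhs al ac.1 ac.2 j].
Proof.
move=> /decomposition_exists [[a c] [ha hc hg]]; exists (a, c); split => //.
case=> a' c' [ha' _ hg'] /=.
congr pair; apply/ffunP => j.
- by rewrite (decomposition_formula ha hg j).1 (decomposition_formula ha' hg' j).1.
- by rewrite (decomposition_formula ha hg j).2 (decomposition_formula ha' hg' j).2.
Qed.

Hypothesis hnn : forall i, 0 <= al i.
Hypothesis hsub : forall i0 : 'I_k, \sum_(i < k | i != i0) al i <= 1.

(* The x_i are nonnegative, since every hat alpha_i is. *)
Lemma xvec_ge0 i j : 0 <= xvec al i j.
Proof.
rewrite /xvec -/Nq -/(nq i) mulr_ge0 //.
  by rewrite divr_ge0 ?ltW ?Nq_gt0 ?nq_gt0.
by case: eqP => _; rewrite ?subr_ge0.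
Qed.

Lemma rhs_communal (a c : {ffun 'I_k -> int}) : inA al a -> (forall i, 0 <= c i) ->
  exists g : {ffun 'I_k -> int}, communal al g /\ forall j, (g j)%:~R = rhs al a c j.
Proof.
move=> ha hc; have [a_bnd a_div] := ha.
have rhs_int j : rhs al a c j \is a Num.int.
  have [q hq] := a_div j.
  rewrite /rhs bvec_Bnum hq (mulrC Aq) mulfK ?Aq_neq0 //.
  rewrite rpredD ?intr_int //; apply: rpred_sum => i _.
  by rewrite rpredM ?intr_int ?xvec_int.
pose g := [ffun j => numq (rhs al a c j)].
have hg j : (g j)%:~R = rhs al a c j by rewrite ffunE -int_numq.
exists g; split => // j; split.
- rewrite -(ler0z rat) hg rhs_comb; apply: sumr_ge0 => i _.
  rewrite mulr_ge0 ?xvec_ge0 // addr_ge0 ?ler0z ?hc //.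
  by rewrite divr_ge0 ?ler0z ?(ltW AA_gt0) ?(a_bnd i).1.
- rewrite communal_tform (tform_rhs hg j) addr_ge0 ?mulr_ge0 ?hc ?(ltW AA_gt0) //.
  exact: (a_bnd j).1.
Qed.

End Communal.

Theorem mainTheorem7 (k : nat) (hk : (1 < k)%N) (al : 'I_k -> rat)
  (hnn : forall i, 0 <= al i)
  (hsub : forall i0 : 'I_k, \sum_(i < k | i != i0) al i <= 1)
  (hsum : 1 < \sum_(i < k) al i) :
  (* existence and uniqueness of the decomposition *)
  (forall g : {ffun 'I_k -> int}, communal al g ->
     exists! ac : {ffun 'I_k -> int} * {ffun 'I_k -> int},
       [/\ inA al ac.1, (forall i, 0 <= ac.2 i) &
           forall j, (g j)%:~R = rhs al ac.1 ac.2 j])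
  /\
  (* every such right-hand side is an alpha-communal integer k-tuple *)
  (forall a c : {ffun 'I_k -> int}, inA al a -> (forall i, 0 <= c i) ->
     exists g : {ffun 'I_k -> int},
       communal al g /\ forall j, (g j)%:~R = rhs al a c j)
  /\
  (* explicit formulas for a and c *)
  (forall g a c : {ffun 'I_k -> int}, communal al g -> inA al a ->
     (forall i, 0 <= c i) -> (forall j, (g j)%:~R = rhs al a c j) ->
     forall j,
       a j = ((mm al j * (\sum_(i < k) g i) - nn al j * g j) %% AA al)%Z /\
       (c j)%:~R = ((mm al j * (\sum_(i < k) g i) - nn al j * g j - a j)%:~R
                    / (AA al)%:~R : rat))
  /\
  (* sum of entries of b(a) *)
  (forall a : {ffun 'I_k -> int}, inA al a ->
     \sum_(j < k) bvec al a j
     = (NN al)%:~R / (AA al)%:~R * \sum_(i < k) ((a i)%:~R / (nn al i)%:~R)).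
Proof.
split; first exact: decomposition_unique.
split; first exact: rhs_communal.
split; first by move=> g a c _ ha _; apply: decomposition_coeffs.
by move=> a _; apply: bvec_sum.
Qed.
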